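(* Let $\varphi:\mathbb{T}^1\times I_0\to\mathbb{T}^1\times I_0$, $\varphi(\theta,x)=(g(\theta),f(\theta,x))$, be a $C^3$ partially hyperbolic skew-product with $g$ a uniformly expanding smooth circle map. There exist $\alpha>0$ and $n_0\in\mathbb{N}$ such that if $\widehat X$ is an $\alpha$-curve and $\varphi^n(\widehat X)$ is the graph of a $C^1$ map, then $\varphi^n(\widehat X)$ is an $\alpha$-curve, provided $n\ge n_0$. Moreover, there exists $C_1=C_1(\alpha)$ such that if $\widehat X$ is an $\alpha$-curve then $\varphi^n(\widehat X)$ is a $C_1$-curve for all $n$, provided that $\varphi^n(\widehat X)$ is a graph.
   Context: Partial hyperbolicity: there exist $C>0$, $0<\sigma<1$ with $\prod_{i=0}^{n-1}|\partial_x f(\varphi^i(\theta,x))|\,/\,|\partial_\theta g^n(\theta)|\le C\sigma^n$ for all $(\theta,x)$ and $n$. For $t>0$, a set $\widehat X\subset\mathbb{T}^1\times I_0$ is a $t$-curve if there are an interval $J\subset\mathbb{T}^1$ and a $C^1$ map $X:J\to I_0$ with $\widehat X=\operatorname{graph}(X)$ and $|X'(\theta)|\le t$ for all $\theta\in J$. *)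

From Stdlib Require Import Reals Lra Lia ZArith.
From Coquelicot Require Import Coquelicot.
Open Scope R_scope.

(* Points of T^1 x R are represented by pairs (theta, x) in R x R, with theta
   read modulo 1.  Subsets of T^1 x I_0 are predicates on R x R that are
   1-periodic in theta (all sets built below are). *)

Definition cont2 (F : R -> R -> R) : Prop :=
  forall th x eps, 0 < eps -> exists delta, 0 < delta /\
    forall th' x', Rabs (th' - th) < delta -> Rabs (x' - x) < delta ->
      Rabs (F th' x' - F th x) < eps.

Definition dth (F : R -> R -> R) : R -> R -> R :=
  fun th x => Derive (fun t => F t x) th.
Definition dx (F : R -> R -> R) : R -> R -> R :=
  fun th x => Derive (fun y => F th y) x.

Fixpoint Ck2 (k : nat) (F : R -> R -> R) : Prop :=
  match k with
  | O => cont2 F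
  | S k' => cont2 F /\
      (forall th x, ex_derive (fun t => F t x) th /\ ex_derive (fun y => F th y) x) /\
      Ck2 k' (dth F) /\ Ck2 k' (dx F)
  end.

Definition phi (G : R -> R) (f : R -> R -> R) (p : R * R) : R * R :=
  (G (fst p), f (fst p) (snd p)).

Definition phin (G : R -> R) (f : R -> R -> R) (n : nat) : R * R -> R * R :=
  Nat.iter n (phi G f).

Fixpoint fiber_prod (G : R -> R) (f : R -> R -> R) (n : nat) (p : R * R) : R :=
  match n with
  | O => 1
  | S m => fiber_prod G f m p *
           Rabs (dx f (fst (phin G f m p)) (snd (phin G f m p)))
  end.

(* Intervals of T^1: (connected) intervals of R injecting into R/Z. *)
Definition is_interval (J : R -> Prop) : Prop :=
  forall u v w, J u -> J w -> u <= v <= w -> J v.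

Definition inj_mod1 (J : R -> Prop) : Prop :=
  forall u v (k : Z), J u -> J v -> v = u + IZR k -> k = 0%Z.

Definition C1_on (J : R -> Prop) (X : R -> R) : Prop :=
  (forall s, J s -> ex_derive X s) /\
  (forall s, J s -> forall eps, 0 < eps -> exists delta, 0 < delta /\
     forall s', J s' -> Rabs (s' - s) < delta ->
       Rabs (Derive X s' - Derive X s) < eps).

Definition graph (J : R -> Prop) (X : R -> R) : R * R -> Prop :=
  fun p => exists s (k : Z), J s /\ fst p = s + IZR k /\ snd p = X s.

Definition C1_graph (a b : R) (S : R * R -> Prop) : Prop :=
  exists (J : R -> Prop) (X : R -> R),
    is_interval J /\ inj_mod1 J /\ C1_on J X /\
    (forall s, J s -> a <= X s <= b) /\
    (forall p, S p <-> graph J X p).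

Definition t_curve (a b t : R) (S : R * R -> Prop) : Prop :=
  exists (J : R -> Prop) (X : R -> R),
    is_interval J /\ inj_mod1 J /\ C1_on J X /\
    (forall s, J s -> a <= X s <= b) /\
    (forall s, J s -> Rabs (Derive X s) <= t) /\
    (forall p, S p <-> graph J X p).

Definition img (G : R -> R) (f : R -> R -> R) (n : nat) (S : R * R -> Prop)
  : R * R -> Prop :=
  fun p => exists q (k : Z), S q /\
    fst p = fst (phin G f n q) + IZR k /\ snd p = snd (phin G f n q).

From Stdlib Require Import Reals Lra Lia ZArith Classical.
From Coquelicot Require Import Coquelicot.
Open Scope R_scope.

(* Differentiating the relation [X' (g^n th) = pi_2 (phi^n (th, X th))] gives
   the graph transform of slopes: [X' (g^n th)] is obtained from [X th] by [n]
   steps of [v |-> (d_th f + d_x f * v) / g'].  Each step multiplies slopes by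
   [d_x f / g'], whose products are at most [C sigma^n] by partial
   hyperbolicity, and adds at most [M / inf |g'|] with [M = sup |d_th f|];
   summing the geometric series, an [alpha]-curve is mapped to a
   [(C sigma^n alpha + K)]-curve, with [K = M C / (inf |g'| (1 - sigma))].
   Taking [alpha = 2K + 1] and [n] so large that [C sigma^n < 1/2] gives both
   claims.  The formula holds at every image point with an interior preimage;
   these are dense in the image graph, and [X'] is continuous. *)

Lemma cont2_continuity_2d_pt F : cont2 F -> forall x y, continuity_2d_pt F x y.
Proof.
  intros HF x y eps.
  destruct (HF x y eps (cond_pos eps)) as [delta [Hdelta Hclose]].
  exists (mkposreal delta Hdelta). exact Hclose.
Qed.

Lemma Ck2_ex_diff_n k F : Ck2 k F -> forall x y, ex_diff_n F k x y.
Proof.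
  revert F. induction k as [|k IH]; intros F HF x y.
  - split; [exact (cont2_continuity_2d_pt F HF x y) | exact I].
  - destruct HF as [Hcont [Hpartial [Hth Hx]]].
    destruct (Hpartial x y) as [Hdth Hdx].
    repeat split; auto using cont2_continuity_2d_pt.
Qed.

Lemma DL_pol_1 F x y u v : DL_pol 1 F x y u v = F x y + dth F x y * u + dx F x y * v.
Proof.
  unfold DL_pol, differential, partial_derive, dth, dx. simpl.
  rewrite !C_n_0, C_n_n. field.
Qed.

Lemma ex_diff_2_differentiable F :
  (forall x y, ex_diff_n F 2 x y) ->
  forall x y, differentiable_pt_lim F x y (dth F x y) (dx F x y).
Proof.
  intros HF x y eps.
  destruct (Taylor_Lagrange_2d F 1 x y (locally_2d_forall _ x y HF)) as [D [d Hd]].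
  assert (Hr : 0 < Rmin d (eps / (Rabs D + 1))).
  { apply Rmin_pos; [apply cond_pos|].
    apply Rdiv_lt_0_compat; [apply cond_pos | pose proof (Rabs_pos D); lra]. }
  exists (mkposreal _ Hr); simpl; intros u v Hu Hv.
  set (m := Rmax (Rabs (u - x)) (Rabs (v - y))).
  assert (Hm : 0 <= m <= eps / (Rabs D + 1)).
  { split; [apply (Rle_trans _ _ _ (Rabs_pos _) (Rmax_l _ _)) |].
    apply Rmax_lub; left; eapply Rlt_le_trans; eauto using Rmin_r. }
  assert (Hdm : (Rabs D + 1) * m <= eps).
  { pose proof (Rabs_pos D).
    replace (pos eps) with ((Rabs D + 1) * (eps / (Rabs D + 1))) by (field; lra).
    apply Rmult_le_compat_l; lra. }
  specialize (Hd u v (Rlt_le_trans _ _ _ Hu (Rmin_l _ _)) (Rlt_le_trans _ _ _ Hv (Rmin_l _ _))).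
  rewrite DL_pol_1 in Hd. fold m in Hd. simpl in Hd.
  replace (F u v - F x y - (dth F x y * (u - x) + dx F x y * (v - y)))
    with (F u v - (F x y + dth F x y * (u - x) + dx F x y * (v - y))) by ring.
  pose proof (Rle_abs D).
  nra.
Qed.

Lemma cont2_bounded_on_rectangle F lo hi a b : cont2 F ->
  exists M, forall th x, lo <= th <= hi -> a <= x <= b -> Rabs (F th x) <= M.
Proof.
  intros HF.
  destruct (uniform_continuity_2d F lo hi a b
              (fun th x _ _ => cont2_continuity_2d_pt F HF th x) (mkposreal 1 Rlt_0_1))
    as [delta Hdelta]; simpl in Hdelta.
  set (h := delta / 2).
  assert (Hh : 0 < h < delta) by (pose proof (cond_pos delta); unfold h; lra).
  (* walk from (lo, a) in steps shorter than the modulus of uniform continuity *)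
  assert (Hsteps : forall k th x, lo <= th <= hi -> a <= x <= b ->
            th - lo <= INR k * h -> x - a <= INR k * h ->
            Rabs (F th x) <= Rabs (F lo a) + INR k).
  { induction k as [|k IH]; intros th x Hth Hx Hth' Hx'.
    - simpl in *. rewrite Rmult_0_l in *. replace th with lo by lra. replace x with a by lra. lra.
    - rewrite S_INR, Rmult_plus_distr_r, Rmult_1_l in Hth', Hx'. rewrite S_INR.
      assert (Hkh : 0 <= INR k * h) by (apply Rmult_le_pos; [apply pos_INR | lra]).
      set (th1 := Rmax lo (th - h)). set (x1 := Rmax a (x - h)).
      assert (Hth1 : lo <= th1 <= th /\ th - th1 <= h /\ th1 - lo <= INR k * h)
        by (unfold th1, Rmax; destruct Rle_dec; lra).
      assert (Hx1 : a <= x1 <= x /\ x - x1 <= h /\ x1 - a <= INR k * h)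
        by (unfold x1, Rmax; destruct Rle_dec; lra).
      assert (Hclose : Rabs (F th x - F th1 x1) < 1).
      { apply Hdelta; try lra; apply Rabs_lt_between; lra. }
      specialize (IH th1 x1 ltac:(lra) ltac:(lra) ltac:(lra) ltac:(lra)).
      pose proof (Rabs_triang_inv (F th x) (F th1 x1)). lra. }
  destruct (INR_archimed h (Rabs (hi - lo) + Rabs (b - a)) ltac:(lra)) as [N HN].
  exists (Rabs (F lo a) + INR N). intros th x Hth Hx.
  apply Hsteps; try assumption;
    pose proof (Rle_abs (hi - lo)); pose proof (Rle_abs (b - a));
    pose proof (Rabs_pos (hi - lo)); pose proof (Rabs_pos (b - a)); lra.
Qed.

Lemma shift_Z (F : R -> R) c : (forall t, F (t + 1) = F t + c) ->
  forall k t, F (t + IZR k) = F t + IZR k * c.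
Proof.
  intros HF k. induction k as [|k IH|k IH] using Z.peano_ind; intros t.
  - rewrite Rplus_0_r; ring.
  - rewrite succ_IZR, <- Rplus_assoc, HF, IH; ring.
  - rewrite <- Z.sub_1_r, minus_IZR.
    replace (t + (IZR k - 1)) with (t - 1 + IZR k) by ring.
    rewrite IH. pose proof (HF (t - 1)) as Hstep.
    replace (t - 1 + 1) with t in Hstep by ring. lra.
Qed.

Lemma periodic_shift_Z (F : R -> R) : (forall t, F (t + 1) = F t) ->
  forall k t, F (t + IZR k) = F t.
Proof.
  intros HF k t. rewrite (shift_Z F 0); [ring|]. intros s; rewrite HF; ring.
Qed.

Lemma R_unit_interval_decomp th : exists th0 k, 0 <= th0 <= 1 /\ th = th0 + IZR k.
Proof.
  destruct (archimed th) as [Hup Hup'].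
  exists (th - IZR (up th) + 1), (up th - 1)%Z.
  rewrite minus_IZR. split; [lra | ring].
Qed.

Lemma dth_periodic f : (forall th x, f (th + 1) x = f th x) ->
  (forall th x, ex_derive (fun t => f t x) th) ->
  forall th x, dth f (th + 1) x = dth f th x.
Proof.
  intros Hper Hder th x. unfold dth.
  rewrite <- (Derive_ext (fun t => f (t + 1) x) (fun t => f t x) th (fun t => Hper t x)).
  rewrite (Derive_comp (fun t => f t x) (fun t => t + 1)); [| apply Hder | auto_derive; exact I].
  replace (Derive (fun t => t + 1) th) with 1
    by (symmetry; apply is_derive_unique; auto_derive; [exact I | ring]).
  ring.
Qed.

Lemma dth_bounded_on_strip f a b : a <= b ->
  (forall th x, f (th + 1) x = f th x) ->
  (forall th x, ex_derive (fun t => f t x) th) -> cont2 (dth f) ->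
  exists M, 0 <= M /\ forall th x, a <= x <= b -> Rabs (dth f th x) <= M.
Proof.
  intros Hab Hper Hder Hcont.
  destruct (cont2_bounded_on_rectangle (dth f) 0 1 a b Hcont) as [M HM].
  assert (Hstrip : forall th x, a <= x <= b -> Rabs (dth f th x) <= M).
  { intros th x Hx. destruct (R_unit_interval_decomp th) as [th0 [k [Hth0 ->]]].
    rewrite (periodic_shift_Z (fun t => dth f t x) (fun t => dth_periodic f Hper Hder t x)).
    apply HM; assumption. }
  exists M. split; [|exact Hstrip].
  apply Rle_trans with (Rabs (dth f 0 a)); [apply Rabs_pos | apply Hstrip; lra].
Qed.

Lemma open_interval_locally (P : R -> Prop) p q z :
  p < z < q -> (forall y, p < y < q -> P y) -> locally z P.
Proof.
  intros Hz HP.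
  assert (Hr : 0 < Rmin (z - p) (q - z)) by (apply Rmin_pos; lra).
  exists (mkposreal _ Hr). intros y Hy. apply HP.
  change (Rabs (y - z) < Rmin (z - p) (q - z)) in Hy.
  apply Rabs_lt_between in Hy. pose proof (Rmin_l (z - p) (q - z)).
  pose proof (Rmin_r (z - p) (q - z)). lra.
Qed.

Lemma is_interval_locally J u t w : is_interval J -> J u -> J w -> u < t < w -> locally t J.
Proof.
  intros HJ Hu Hw Ht. apply (open_interval_locally J u w t Ht).
  intros y Hy. apply (HJ u y w); auto; lra.
Qed.

Lemma is_interval_three_ends J t1 t2 t3 : is_interval J -> J t1 -> J t2 -> J t3 ->
  ~ locally t1 J -> ~ locally t2 J -> ~ locally t3 J -> t1 = t2 \/ t1 = t3 \/ t2 = t3.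
Proof.
  intros HJ H1 H2 H3 N1 N2 N3.
  destruct (Req_dec t1 t2); [now left|]. destruct (Req_dec t1 t3); [now right; left|].
  destruct (Req_dec t2 t3); [now right; right|]. exfalso.
  destruct (Rlt_or_le t1 t2), (Rlt_or_le t1 t3), (Rlt_or_le t2 t3);
    first [ solve [apply N1, (is_interval_locally J t2 t1 t3); auto; lra]
          | solve [apply N1, (is_interval_locally J t3 t1 t2); auto; lra]
          | solve [apply N2, (is_interval_locally J t1 t2 t3); auto; lra]
          | solve [apply N2, (is_interval_locally J t3 t2 t1); auto; lra]
          | solve [apply N3, (is_interval_locally J t1 t3 t2); auto; lra]
          | solve [apply N3, (is_interval_locally J t2 t3 t1); auto; lra] ].
Qed.

Lemma is_interval_short_subinterval J s s1 s2 r : is_interval J -> J s -> J s1 -> J s2 ->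
  s1 < s2 -> 0 < r ->
  exists p q, p < q /\ q - p <= r /\ forall z, p < z < q -> J z /\ Rabs (z - s) < r.
Proof.
  intros HJ Hs H1 H2 H12 Hr.
  destruct (Rlt_or_le s s2) as [Hlt | Hle].
  - exists s, (Rmin (s + r) s2).
    pose proof (Rmin_l (s + r) s2); pose proof (Rmin_r (s + r) s2).
    split; [apply Rmin_glb_lt; lra|]. split; [lra|].
    intros z Hz. split; [apply (HJ s z s2); auto; lra|].
    rewrite Rabs_pos_eq; lra.
  - exists (Rmax (s - r) s1), s.
    pose proof (Rmax_l (s - r) s1); pose proof (Rmax_r (s - r) s1).
    split; [apply Rmax_lub_lt; lra|]. split; [lra|].
    intros z Hz. split; [apply (HJ s1 z s); auto; lra|].
    rewrite Rabs_minus_sym, Rabs_pos_eq; lra.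
Qed.

Lemma C1_on_Derive_bound J X B : is_interval J -> C1_on J X ->
  (exists s1 s2, J s1 /\ J s2 /\ s1 < s2) ->
  (forall p q, p < q -> q - p < 1 -> (forall z, p < z < q -> J z) ->
     exists s, p < s < q /\ Rabs (Derive X s) <= B) ->
  forall s, J s -> Rabs (Derive X s) <= B.
Proof.
  intros HJ [_ Hcont] [s1 [s2 [H1 [H2 H12]]]] Hsomewhere s Hs.
  apply Rnot_lt_le; intros Hgt.
  destruct (Hcont s Hs (Rabs (Derive X s) - B)) as [del [Hdel Hclose]]; [lra|].
  destruct (is_interval_short_subinterval J s s1 s2 (Rmin del (1 / 2)) HJ Hs H1 H2 H12)
    as [p [q [Hpq [Hlen Hsub]]]]; [apply Rmin_pos; lra|].
  pose proof (Rmin_l del (1 / 2)); pose proof (Rmin_r del (1 / 2)).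
  destruct (Hsomewhere p q Hpq ltac:(lra) (fun z Hz => proj1 (Hsub z Hz))) as [s' [Hs' HB]].
  destruct (Hsub s' Hs') as [HJs' Hdist].
  specialize (Hclose s' HJs' ltac:(lra)).
  pose proof (Rabs_triang_inv (Derive X s) (Derive X s')).
  rewrite Rabs_minus_sym in Hclose. lra.
Qed.

(* Over a degenerate domain (at most one point) the derivative of [X] is
   unconstrained, so [X] is replaced by a constant. *)
Lemma C1_graph_t_curve a b t S : 0 <= t -> C1_graph a b S ->
  (forall J X, is_interval J -> inj_mod1 J -> C1_on J X ->
     (forall p, S p <-> graph J X p) -> (exists s1 s2, J s1 /\ J s2 /\ s1 < s2) ->
     forall s, J s -> Rabs (Derive X s) <= t) ->
  t_curve a b t S.
Proof.
  intros Ht [J [X [HJ [Hinj [HX [Hab HS]]]]]] Hbound.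
  destruct (classic (exists s1 s2, J s1 /\ J s2 /\ s1 < s2)) as [Hnd | Hdeg].
  { exists J, X. do 4 (split; [assumption|]). split; [|assumption].
    exact (Hbound J X HJ Hinj HX HS Hnd). }
  assert (Hconst : exists c0, forall s, J s -> X s = c0).
  { destruct (classic (exists s0, J s0)) as [[s0 Hs0] | Hempty].
    - exists (X s0). intros s Hs.
      destruct (Rtotal_order s s0) as [Hlt | [-> | Hgt]]; [|reflexivity|];
        exfalso; apply Hdeg; eauto.
    - exists 0. intros s Hs. exfalso. eauto. }
  destruct Hconst as [c0 Hc0].
  exists J, (fun _ => c0). split; [assumption|]. split; [assumption|].
  split; [split|].
  - intros s _. apply ex_derive_const.
  - intros s _ eps Heps. exists 1. split; [lra|]. intros s' _ _.
    rewrite !Derive_const, Rminus_diag, Rabs_R0. exact Heps.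
  - split; [intros s Hs; rewrite <- (Hc0 s Hs); auto|].
    split; [intros s _; rewrite Derive_const, Rabs_R0; exact Ht|].
    intros p. rewrite HS.
    split; intros [s [k [Hs Hp]]]; exists s, k; rewrite (Hc0 s Hs) in *; auto.
Qed.

Lemma t_curve_le a b t t' S : t <= t' -> t_curve a b t S -> t_curve a b t' S.
Proof.
  intros Htt' [J [X [HJ [Hinj [HX [Hab [Hslope HS]]]]]]].
  exists J, X. do 4 (split; [assumption|]). split; [|assumption].
  intros s Hs. specialize (Hslope s Hs). lra.
Qed.

Lemma t_curve_invariant_of_affine_bound a b C sigma K
    (Img : nat -> (R * R -> Prop) -> R * R -> Prop) :
  0 < C -> 0 < sigma < 1 -> 0 <= K ->
  (forall n t0 S, 0 <= t0 -> t_curve a b t0 S -> C1_graph a b (Img n S) ->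
     t_curve a b (C * sigma ^ n * t0 + K) (Img n S)) ->
  exists (alpha : R) (n0 : nat), 0 < alpha /\
    (forall n S, (n0 <= n)%nat -> t_curve a b alpha S -> C1_graph a b (Img n S) ->
       t_curve a b alpha (Img n S)) /\
    (exists C1 : R, forall n S, t_curve a b alpha S -> C1_graph a b (Img n S) ->
       t_curve a b C1 (Img n S)).
Proof.
  intros HC Hsigma HK Himage.
  destruct (pow_lt_1_zero sigma ltac:(rewrite Rabs_pos_eq; lra) (/ (2 * C))
              ltac:(apply Rinv_0_lt_compat; lra)) as [N HN].
  exists (2 * K + 1), N. split; [lra|]. split.
  - intros n S Hn HS Himg.
    apply (t_curve_le a b (C * sigma ^ n * (2 * K + 1) + K)); [|apply Himage; auto; lra].
    specialize (HN n Hn). rewrite Rabs_pos_eq in HN by (apply pow_le; lra).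
    assert (C * sigma ^ n < 1 / 2).
    { apply (Rmult_lt_compat_l C) in HN; [|exact HC].
      replace (C * / (2 * C)) with (1 / 2) in HN by (field; lra). exact HN. }
    nra.
  - exists (C * (2 * K + 1) + K). intros n S HS Himg.
    apply (t_curve_le a b (C * sigma ^ n * (2 * K + 1) + K)); [|apply Himage; auto; lra].
    assert (sigma ^ n <= 1) by (rewrite <- (pow1 n); apply pow_incr; lra).
    assert (0 <= C * (2 * K + 1) * (1 - sigma ^ n))
      by (apply Rmult_le_pos; [apply Rmult_le_pos|]; lra).
    lra.
Qed.

Section SkewProduct.

Variables (G : R -> R) (f : R -> R -> R).

Lemma phin_succ_r n p : phin G f (S n) p = phin G f n (phi G f p).
Proof. apply Nat.iter_succ_r. Qed.

Lemma fst_phin n p : fst (phin G f n p) = Nat.iter n G (fst p).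
Proof. induction n as [|n IH]; [reflexivity|]. unfold phin in *; simpl. now rewrite IH. Qed.

Lemma fiber_prod_succ_l n p :
  fiber_prod G f (S n) p = Rabs (dx f (fst p) (snd p)) * fiber_prod G f n (phi G f p).
Proof.
  revert p. induction n as [|n IH]; intros p; [simpl; ring|].
  change (fiber_prod G f (S (S n)) p) with
    (fiber_prod G f (S n) p * Rabs (dx f (fst (phin G f (S n) p)) (snd (phin G f (S n) p)))).
  rewrite IH, phin_succ_r. simpl. ring.
Qed.

Lemma fiber_prod_ge0 n p : 0 <= fiber_prod G f n p.
Proof.
  induction n as [|n IH]; simpl; [lra|]. apply Rmult_le_pos; [exact IH | apply Rabs_pos].
Qed.

Variable d : Z.
Hypothesis G_degree : forall th, G (th + 1) = G th + IZR d.
Hypothesis f_periodic : forall th x, f (th + 1) x = f th x.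

Lemma phin_shift_Z n k th x : exists k',
  phin G f n (th + IZR k, x) = (fst (phin G f n (th, x)) + IZR k', snd (phin G f n (th, x))).
Proof.
  induction n as [|n [k' IH]]; [now exists k|].
  change (phin G f (S n) ?p) with (phi G f (phin G f n p)).
  rewrite IH. exists (k' * d)%Z. unfold phi; simpl.
  rewrite (shift_Z G (IZR d) G_degree), mult_IZR,
    (periodic_shift_Z (fun s => f s _) (fun s => f_periodic s _)).
  reflexivity.
Qed.

Lemma img_graph_preimage n S J X z y : (forall p, S p <-> graph J X p) ->
  img G f n S (z, y) ->
  exists th K, J th /\ z = Nat.iter n G th + IZR K /\ y = snd (phin G f n (th, X th)).
Proof.
  intros HS [[th0 x0] [k [Hq [E1 E2]]]].
  apply HS in Hq as [s [ks [Hs [Es1 Es2]]]]. simpl in Es1, Es2, E1, E2. subst th0 x0.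
  destruct (phin_shift_Z n ks s (X s)) as [k' E]. rewrite E in E1, E2. simpl in E1, E2.
  exists s, (k' + k)%Z. split; [exact Hs|]. split; [|exact E2].
  rewrite E1, plus_IZR, fst_phin. simpl. ring.
Qed.

Hypothesis G_derivable : forall t, ex_derive G t.

Lemma iter_ex_derive n (t : R) : ex_derive (Nat.iter n G) t.
Proof.
  revert t. induction n as [|n IH]; intros t; [apply ex_derive_id|].
  change (ex_derive (fun s => G (Nat.iter n G s)) t).
  apply ex_derive_comp; [apply G_derivable | apply IH].
Qed.

Lemma Derive_iter_succ n t :
  Derive (Nat.iter (S n) G) t = Derive (Nat.iter n G) (G t) * Derive G t.
Proof.
  rewrite (Derive_ext _ (fun s => Nat.iter n G (G s)) t (fun s => Nat.iter_succ_r n _ G s)).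
  rewrite Derive_comp by auto using iter_ex_derive. ring.
Qed.

Lemma Derive_iter_0 t : Derive (Nat.iter 0 G) t = 1.
Proof. apply Derive_id. Qed.

Hypothesis f_differentiable :
  forall th x, differentiable_pt_lim f th x (dth f th x) (dx f th x).

(* The slope of the image of a curve of slope [v] through [p], i.e. the
   action of [D phi p] on the line of slope [v]. *)
Definition slope_map (p : R * R) (v : R) : R :=
  (dth f (fst p) (snd p) + dx f (fst p) (snd p) * v) / Derive G (fst p).

Fixpoint slope_iter (n : nat) (p : R * R) (v : R) : R :=
  match n with
  | O => v
  | S m => slope_iter m (phi G f p) (slope_map p v)
  end.

Definition fiber_ratio (n : nat) (p : R * R) : R :=
  fiber_prod G f n p / Rabs (Derive (Nat.iter n G) (fst p)).

Lemma fiber_ratio_0 p : fiber_ratio 0 p = 1.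
Proof. unfold fiber_ratio. rewrite Derive_iter_0, Rabs_R1. simpl. field. Qed.

Lemma fiber_ratio_succ n p : fiber_ratio (S n) p =
  Rabs (dx f (fst p) (snd p)) / Rabs (Derive G (fst p)) * fiber_ratio n (phi G f p).
Proof.
  unfold fiber_ratio. rewrite fiber_prod_succ_l, Derive_iter_succ, Rabs_mult.
  unfold Rdiv. rewrite Rinv_mult. simpl. ring.
Qed.

Section NonCritical.

Hypothesis DG_neq0 : forall t, Derive G t <> 0.

Lemma Derive_iter_neq0 n t : Derive (Nat.iter n G) t <> 0.
Proof.
  revert t. induction n as [|n IH]; intros t.
  - rewrite Derive_iter_0. apply R1_neq_R0.
  - rewrite Derive_iter_succ. apply Rmult_integral_contrapositive_currified; auto.
Qed.

Lemma fiber_ratio_ge0 n p : 0 <= fiber_ratio n p.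
Proof.
  apply Rle_mult_inv_pos; [apply fiber_prod_ge0 | apply Rabs_pos_lt, Derive_iter_neq0].
Qed.

Lemma is_derive_orbit n (u w : R -> R) (t du dw : R) :
  is_derive u t du -> is_derive w t dw -> du <> 0 ->
  is_derive (fun s => snd (phin G f n (u s, w s))) t
    (Derive (Nat.iter n G) (u t) * du * slope_iter n (u t, w t) (dw / du)).
Proof.
  revert u w du dw. induction n as [|n IH]; intros u w du dw Hu Hw Hdu.
  - rewrite Derive_iter_0. cbn [slope_iter].
    replace (1 * du * (dw / du)) with dw by (field; exact Hdu). exact Hw.
  - set (g' := Derive G (u t)).
    set (dw' := dth f (u t) (w t) * du + dx f (u t) (w t) * dw).
    assert (Hu' : is_derive (fun s => G (u s)) t (du * g')).
    { apply (is_derive_comp G u); [apply Derive_correct, G_derivable | exact Hu]. }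
    assert (Hw' : is_derive (fun s => f (u s) (w s)) t dw').
    { apply is_derive_Reals, derivable_pt_lim_comp_2d;
        [apply f_differentiable | apply is_derive_Reals ..]; assumption. }
    assert (Hdu' : du * g' <> 0)
      by (apply Rmult_integral_contrapositive_currified; [exact Hdu | apply DG_neq0]).
    assert (Hslope : slope_map (u t, w t) (dw / du) = dw' / (du * g'))
      by (unfold slope_map, dw', g'; simpl; field; auto).
    eapply is_derive_ext; [intros s; symmetry; apply (f_equal snd), phin_succ_r|].
    rewrite Derive_iter_succ. cbn [slope_iter]. rewrite Hslope.
    replace (Derive (Nat.iter n G) (G (u t)) * Derive G (u t) * du)
      with (Derive (Nat.iter n G) (G (u t)) * (du * g')) by (unfold g'; ring).
    exact (IH _ _ _ _ Hu' Hw' Hdu').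
Qed.

Lemma is_derive_orbit_graph n (X : R -> R) th v : is_derive X th v ->
  is_derive (fun s => snd (phin G f n (s, X s))) th
    (Derive (Nat.iter n G) th * slope_iter n (th, X th) v).
Proof.
  intros HX.
  pose proof (is_derive_orbit n (fun s => s) X th 1 v (is_derive_id th) HX R1_neq_R0) as H.
  rewrite Rmult_1_r, Rdiv_1_r in H. exact H.
Qed.

End NonCritical.

Variables (a b m0 M C sigma : R).
Hypothesis f_strip : forall th x, a <= x <= b -> a <= f th x <= b.
Hypothesis M_ge0 : 0 <= M.
Hypothesis dth_le : forall th x, a <= x <= b -> Rabs (dth f th x) <= M.
Hypothesis m0_gt0 : 0 < m0.
Hypothesis DG_ge : forall t, m0 <= Rabs (Derive G t).
Hypothesis C_ge0 : 0 <= C.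
Hypothesis sigma_bounds : 0 < sigma < 1.
Hypothesis fiber_ratio_le : forall n p, a <= snd p <= b -> fiber_ratio n p <= C * sigma ^ n.

Lemma Derive_G_neq0 t : Derive G t <> 0.
Proof. intros E. pose proof (DG_ge t) as H. rewrite E, Rabs_R0 in H. lra. Qed.

Lemma slope_map_bound p v : a <= snd p <= b ->
  Rabs (slope_map p v) <=
  M / m0 + Rabs (dx f (fst p) (snd p)) / Rabs (Derive G (fst p)) * Rabs v.
Proof.
  intros Hp. unfold slope_map.
  rewrite Rabs_div by apply Derive_G_neq0.
  pose proof (DG_ge (fst p)) as Hg.
  set (g := Rabs (Derive G (fst p))) in *.
  pose proof (Rabs_triang (dth f (fst p) (snd p)) (dx f (fst p) (snd p) * v)) as Hnum.
  rewrite Rabs_mult in Hnum.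
  assert (Hginv : 0 < / g) by (apply Rinv_0_lt_compat; lra).
  assert (HB : Rabs (dth f (fst p) (snd p)) * / g <= M * / m0).
  { apply Rmult_le_compat; [apply Rabs_pos | lra | apply dth_le, Hp |].
    apply Rinv_le_contravar; lra. }
  unfold Rdiv.
  apply Rle_trans with ((Rabs (dth f (fst p) (snd p)) +
    Rabs (dx f (fst p) (snd p)) * Rabs v) * / g); [apply Rmult_le_compat_r; lra|].
  lra.
Qed.

Lemma slope_iter_bound n p v : a <= snd p <= b ->
  Rabs (slope_iter n p v) <=
  fiber_ratio n p * Rabs v + M / m0 * C * (1 - sigma ^ n) / (1 - sigma).
Proof.
  revert p v. induction n as [|n IH]; intros p v Hp.
  - rewrite fiber_ratio_0. simpl.
    replace (M / m0 * C * (1 - 1) / (1 - sigma)) with 0 by (field; lra). lra.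
  - cbn [slope_iter]. rewrite fiber_ratio_succ.
    assert (Hp' : a <= snd (phi G f p) <= b) by (apply f_strip, Hp).
    pose proof (fiber_ratio_ge0 Derive_G_neq0 n (phi G f p)) as Hr0.
    pose proof (fiber_ratio_le n _ Hp') as Hr.
    pose proof (slope_map_bound p v Hp) as Hmap.
    set (r := fiber_ratio n (phi G f p)) in *.
    set (q := Rabs (dx f (fst p) (snd p)) / Rabs (Derive G (fst p))) in *.
    eapply Rle_trans; [apply IH, Hp'|]. fold r.
    assert (HM : 0 <= M / m0) by (apply Rle_mult_inv_pos; lra).
    assert (Hstep : r * Rabs (slope_map p v) <= C * sigma ^ n * (M / m0) + q * r * Rabs v).
    { apply Rle_trans with (r * (M / m0 + q * Rabs v)); [apply Rmult_le_compat_l; assumption|].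
      rewrite Rmult_plus_distr_l.
      assert (r * (M / m0) <= C * sigma ^ n * (M / m0)) by (apply Rmult_le_compat_r; assumption).
      lra. }
    assert (Hsum : C * sigma ^ n * (M / m0) + M / m0 * C * (1 - sigma ^ n) / (1 - sigma)
                   = M / m0 * C * (1 - sigma ^ S n) / (1 - sigma)) by (simpl; field; lra).
    lra.
Qed.

Lemma graph_image_locally n S J X J' X' th K :
  (forall p, S p <-> graph J X p) -> (forall p, img G f n S p <-> graph J' X' p) ->
  inj_mod1 J' -> locally th J -> locally (Nat.iter n G th + IZR K) J' ->
  locally th (fun z => X' (Nat.iter n G z + IZR K) = snd (phin G f n (z, X z))).
Proof.
  intros HS Himg Hinj HJ HJ'.
  assert (Hcont : continuous (fun z : R => Nat.iter n G z + IZR K) th).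
  { apply (ex_derive_continuous (fun z : R => Nat.iter n G z + IZR K)).
    apply (ex_derive_plus (Nat.iter n G) (fun _ => IZR K));
      [apply iter_ex_derive | apply ex_derive_const]. }
  assert (HJ'z : locally th (fun z => J' (Nat.iter n G z + IZR K))) by exact (Hcont J' HJ').
  apply (filter_imp (fun z => J z /\ J' (Nat.iter n G z + IZR K)));
    [|exact (filter_and _ _ HJ HJ'z)].
  intros z [Hz Hz'].
  assert (Him : img G f n S (Nat.iter n G z + IZR K, snd (phin G f n (z, X z)))).
  { exists (z, X z), K. split; [apply HS; exists z, 0%Z; simpl; rewrite Rplus_0_r; auto|].
    rewrite fst_phin. split; reflexivity. }
  apply Himg in Him as [s [m [Hs [E1 E2]]]]. simpl in E1, E2.
  rewrite (Hinj s _ m Hs Hz' E1), Rplus_0_r in E1.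
  rewrite E1. symmetry. exact E2.
Qed.

Lemma Derive_image_graph n S J X J' X' th K :
  (forall p, S p <-> graph J X p) -> (forall p, img G f n S p <-> graph J' X' p) ->
  inj_mod1 J' -> locally th J -> locally (Nat.iter n G th + IZR K) J' ->
  ex_derive X th -> ex_derive X' (Nat.iter n G th + IZR K) ->
  Derive X' (Nat.iter n G th + IZR K) = slope_iter n (th, X th) (Derive X th).
Proof.
  intros HS Himg Hinj HJ HJ' HX HX'.
  set (D := Derive (Nat.iter n G) th).
  assert (Hshift : is_derive (fun z => Nat.iter n G z + IZR K) th (D + 0)).
  { apply (is_derive_plus (Nat.iter n G) (fun _ => IZR K));
      [apply Derive_correct, iter_ex_derive | exact (is_derive_const (IZR K) th)]. }
  rewrite Rplus_0_r in Hshift.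
  assert (Hlhs : is_derive (fun z => snd (phin G f n (z, X z))) th
                   (D * Derive X' (Nat.iter n G th + IZR K))).
  { apply (is_derive_ext_loc (fun z => X' (Nat.iter n G z + IZR K)));
      [exact (graph_image_locally n S J X J' X' th K HS Himg Hinj HJ HJ')|].
    exact (is_derive_comp X' _ th _ _ (Derive_correct _ _ HX') Hshift). }
  pose proof (is_derive_orbit_graph Derive_G_neq0 n X th _ (Derive_correct _ _ HX)) as Hrhs.
  apply (Rmult_eq_reg_l D); [|apply Derive_iter_neq0, Derive_G_neq0].
  rewrite <- (is_derive_unique _ _ _ Hlhs). exact (is_derive_unique _ _ _ Hrhs).
Qed.

Lemma exists_interior_preimage n S J X J' X' p q : is_interval J ->
  (forall pt, S pt <-> graph J X pt) -> (forall pt, img G f n S pt <-> graph J' X' pt) ->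
  p < q -> q - p < 1 -> (forall z, p < z < q -> J' z) ->
  exists th K, locally th J /\ p < Nat.iter n G th + IZR K < q.
Proof.
  intros HJ HS Himg Hpq Hq1 Hsub.
  assert (Hpre : forall z, p < z < q -> exists th K, J th /\ z = Nat.iter n G th + IZR K).
  { intros z Hz.
    assert (Hgr : img G f n S (z, X' z))
      by (apply Himg; exists z, 0%Z; simpl; rewrite Rplus_0_r; auto).
    destruct (img_graph_preimage n S J X z _ HS Hgr) as [th [K [Hth [Ez _]]]]. eauto. }
  assert (Hsep : forall z z' th K K', z = Nat.iter n G th + IZR K ->
            z' = Nat.iter n G th + IZR K' -> 0 < z' - z < 1 -> False).
  { intros z z' th K K' -> -> Hzz'.
    replace (Nat.iter n G th + IZR K' - (Nat.iter n G th + IZR K)) with (IZR (K' - K))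
      in Hzz' by (rewrite minus_IZR; ring).
    rewrite (one_IZR_lt1 (K' - K)) in Hzz'; lra. }
  set (h := (q - p) / 4).
  destruct (Hpre (p + h)) as [t1 [K1 [H1 E1]]]; [unfold h; lra|].
  destruct (Hpre (p + 2 * h)) as [t2 [K2 [H2 E2]]]; [unfold h; lra|].
  destruct (Hpre (p + 3 * h)) as [t3 [K3 [H3 E3]]]; [unfold h; lra|].
  destruct (classic (locally t1 J)) as [L1 | N1];
    [exists t1, K1; split; [exact L1 | rewrite <- E1; unfold h; lra]|].
  destruct (classic (locally t2 J)) as [L2 | N2];
    [exists t2, K2; split; [exact L2 | rewrite <- E2; unfold h; lra]|].
  destruct (classic (locally t3 J)) as [L3 | N3];
    [exists t3, K3; split; [exact L3 | rewrite <- E3; unfold h; lra]|].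
  exfalso.
  destruct (is_interval_three_ends J t1 t2 t3 HJ H1 H2 H3 N1 N2 N3) as [<- | [<- | <-]];
    [ apply (Hsep _ _ t1 K1 K2 E1 E2) | apply (Hsep _ _ t1 K1 K3 E1 E3)
    | apply (Hsep _ _ t2 K2 K3 E2 E3) ]; unfold h; lra.
Qed.

Lemma image_t_curve n t0 S : 0 <= t0 -> t_curve a b t0 S -> C1_graph a b (img G f n S) ->
  t_curve a b (C * sigma ^ n * t0 + M / m0 * C / (1 - sigma)) (img G f n S).
Proof.
  intros Ht0 [J [X [HJ [_ [[HXd _] [HXab [HXt HS]]]]]]] Himg.
  assert (Hsn : 0 < sigma ^ n) by (apply pow_lt; lra).
  assert (HK : 0 <= M / m0 * C / (1 - sigma)).
  { apply Rle_mult_inv_pos; [apply Rmult_le_pos; [apply Rle_mult_inv_pos|]|]; lra. }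
  assert (HKn : M / m0 * C * (1 - sigma ^ n) / (1 - sigma) <= M / m0 * C / (1 - sigma)).
  { replace (M / m0 * C * (1 - sigma ^ n) / (1 - sigma))
      with (M / m0 * C / (1 - sigma) - M / m0 * C / (1 - sigma) * sigma ^ n) by (field; lra).
    pose proof (Rmult_le_pos _ _ HK (Rlt_le _ _ Hsn)). lra. }
  apply C1_graph_t_curve; [|exact Himg|].
  { pose proof (Rmult_le_pos _ _ (Rmult_le_pos _ _ C_ge0 (Rlt_le _ _ Hsn)) Ht0). lra. }
  intros J' X' HJ' Hinj' HX' HS' Hnd.
  apply (C1_on_Derive_bound J' X'); [exact HJ' | exact HX' | exact Hnd |].
  intros p q Hpq Hq1 Hsub.
  destruct (exists_interior_preimage n S J X J' X' p q HJ HS HS' Hpq Hq1 Hsub)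
    as [th [K [Hth Hz]]].
  exists (Nat.iter n G th + IZR K). split; [exact Hz|].
  pose proof (locally_singleton _ _ Hth) as HJth.
  rewrite (Derive_image_graph n S J X J' X' th K HS HS' Hinj' Hth);
    [| apply (open_interval_locally J' p q); auto | apply HXd, HJth | apply HX', Hsub, Hz].
  eapply Rle_trans; [apply slope_iter_bound, HXab, HJth|].
  pose proof (fiber_ratio_ge0 Derive_G_neq0 n (th, X th)).
  pose proof (fiber_ratio_le n (th, X th) (HXab th HJth)).
  assert (fiber_ratio n (th, X th) * Rabs (Derive X th) <= C * sigma ^ n * t0)
    by (apply Rmult_le_compat; auto using Rabs_pos).
  lra.
Qed.

End SkewProduct.

Theorem proposition6p2 (a b : R) (G : R -> R) (f : R -> R -> R) :
  a < b ->
  (forall (k : nat) (th : R), ex_derive_n G k th) ->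
  (exists d : Z, forall th, G (th + 1) = G th + IZR d) ->
  (exists c lam, 0 < c /\ 1 < lam /\
     forall (n : nat) th, c * lam ^ n <= Rabs (Derive (Nat.iter n G) th)) ->
  (forall th x, f (th + 1) x = f th x) ->
  Ck2 3 f ->
  (forall th x, a <= x <= b -> a <= f th x <= b) ->
  (exists C sigma, 0 < C /\ 0 < sigma < 1 /\
     forall (n : nat) th x, a <= x <= b ->
       fiber_prod G f n (th, x) / Rabs (Derive (Nat.iter n G) th) <= C * sigma ^ n) ->
  exists (alpha : R) (n0 : nat), 0 < alpha /\
    (forall (n : nat) (S : R * R -> Prop), (n0 <= n)%nat ->
       t_curve a b alpha S -> C1_graph a b (img G f n S) ->
       t_curve a b alpha (img G f n S)) /\
    (exists C1 : R, forall (n : nat) (S : R * R -> Prop),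
       t_curve a b alpha S -> C1_graph a b (img G f n S) ->
       t_curve a b C1 (img G f n S)).
Proof.
  intros Hab HGsmooth [d HGdeg] [c [lam [Hc [Hlam Hexp]]]] Hper HCk Hstrip
    [C [sigma [HC [Hsigma Hratio]]]].
  assert (HGder : forall t, ex_derive G t) by (intros t; exact (HGsmooth 1%nat t)).
  assert (Hcl : 0 < c * lam) by nra.
  assert (HDG : forall t, c * lam <= Rabs (Derive G t)).
  { intros t. pose proof (Hexp 1%nat t) as H. simpl in H. rewrite Rmult_1_r in H. exact H. }
  assert (Hdiff : forall th x, differentiable_pt_lim f th x (dth f th x) (dx f th x)).
  { apply ex_diff_2_differentiable. intros th x.
    apply (ex_diff_n_m 3); [lia | apply Ck2_ex_diff_n, HCk]. }
  destruct HCk as [_ [Hpartial [[Hdth_cont _] _]]].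
  destruct (dth_bounded_on_strip f a b ltac:(lra) Hper (fun th x => proj1 (Hpartial th x))
              Hdth_cont) as [M [HM0 HM]].
  assert (Hratio' : forall n p, a <= snd p <= b -> fiber_ratio G f n p <= C * sigma ^ n)
    by (intros n [th x]; apply Hratio).
  apply (t_curve_invariant_of_affine_bound a b C sigma (M / (c * lam) * C / (1 - sigma)));
    [lra | lra | |].
  - apply Rle_mult_inv_pos; [apply Rmult_le_pos; [apply Rle_mult_inv_pos|]|]; lra.
  - intros n t0 S. eapply image_t_curve; eauto; lra.
Qed.
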